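(* If a monoid $M$ is the limit of an inductive system of strongly sofic monoids, then $M$ is strongly sofic.
   Context: An inductive system of monoids $(M_i,\psi_{ji})$ consists of a directed set $I$, monoids $M_i$ ($i\in I$), and monoid morphisms $\psi_{ji}\colon M_i\to M_j$ for $i\le j$ with $\psi_{ii}=\mathrm{Id}$ and $\psi_{kj}\circ\psi_{ji}=\psi_{ki}$ for $i\le j\le k$. Its limit is $\coprod_i M_i/\sim$, where $x_i\sim x_j$ ($x_i\in M_i$, $x_j\in M_j$) iff $\psi_{\ell i}(x_i)=\psi_{\ell j}(x_j)$ for some $\ell\ge i,j$, with multiplication $[x_i][y_j]=[\psi_{\ell i}(x_i)\psi_{\ell j}(y_j)]$ for $\ell\ge i,j$. Hamming metric on $\operatorname{Map}(D)$ (maps $D\to D$, $D$ finite non-empty): $d_D^{\mathrm{Ham}}(f,g)=\frac{1}{|D|}|\{v:f(v)\ne g(v)\}|$. A monoid $M$ is strongly sofic if for every finite $K\subset M$ there is an integer $\Delta_K\ge1$ such that for every $\varepsilon>0$ there exist a non-empty finite set $D$ and a map $\sigma\colon M\to\operatorname{Map}(D)$ with (1) $\sigma(1_M)=\mathrm{Id}_D$; (2) $d_D^{\mathrm{Ham}}(\sigma(k_1k_2),\sigma(k_1)\sigma(k_2))\le\varepsilon$ for $k_1,k_2\in K$; (3) $d_D^{\mathrm{Ham}}(\sigma(k_1),\sigma(k_2))\ge1-\varepsilon$ for distinct $k_1,k_2\in K$; (4) $|\sigma(k)^{-1}(v)|\le\Delta_K$ for $k\in K$, $v\in D$. *)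

From mathcomp Require Import all_boot.
From Stdlib Require Import Reals List.

Set Implicit Arguments.
Unset Strict Implicit.
Unset Printing Implicit Defensive.

Record monoid := Monoid {
  mcarrier :> Type;
  mmul : mcarrier -> mcarrier -> mcarrier;
  mone : mcarrier;
  mmulA : forall x y z, mmul x (mmul y z) = mmul (mmul x y) z;
  mmul1x : forall x, mmul mone x = x;
  mmulx1 : forall x, mmul x mone = x
}.

Definition is_monoid_morphism (M N : monoid) (f : M -> N) : Prop :=
  f (mone M) = mone N /\ forall x y, f (mmul x y) = mmul (f x) (f y).

Definition directed (I : Type) (le : I -> I -> bool) : Prop :=
  inhabited I /\
  (forall i, le i i) /\
  (forall i j k, le i j -> le j k -> le i k) /\
  (forall i j, exists k, le i k /\ le j k).

Definition inductive_system (I : Type) (le : I -> I -> bool)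
    (Ms : I -> monoid) (psi : forall i j, le i j -> Ms i -> Ms j) : Prop :=
  directed le /\
  (forall i j (h : le i j), is_monoid_morphism (psi i j h)) /\
  (forall i (h : le i i) x, psi i i h x = x) /\
  (forall i j k (hij : le i j) (hjk : le j k) (hik : le i k) x,
      psi j k hjk (psi i j hij x) = psi i k hik x).

(* M (with maps phi_i : M_i -> M) is the limit of the inductive system:
   M is identified with (coprod_i M_i)/~ via [x_i] |-> phi_i x_i, where
   x_i ~ x_j iff psi_li x_i = psi_lj x_j for some l >= i,j, and the
   multiplication of M is [x_i][y_j] = [psi_li x_i * psi_lj y_j]. *)
Definition is_inductive_limit (I : Type) (le : I -> I -> bool)
    (Ms : I -> monoid) (psi : forall i j, le i j -> Ms i -> Ms j)
    (M : monoid) (phi : forall i, Ms i -> M) : Prop :=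
  (forall m : M, exists i (x : Ms i), phi i x = m) /\
  (forall i j (x : Ms i) (y : Ms j),
      phi i x = phi j y <->
      exists l (hil : le i l) (hjl : le j l), psi i l hil x = psi j l hjl y) /\
  (forall i j l (hil : le i l) (hjl : le j l) (x : Ms i) (y : Ms j),
      mmul (phi i x) (phi j y) = phi l (mmul (psi i l hil x) (psi j l hjl y))).

Definition ham_dist (D : finType) (f g : D -> D) : R :=
  (INR #|[pred v | f v != g v]| / INR #|D|)%R.

Definition strongly_sofic (M : monoid) : Prop :=
  forall K : list M, exists Delta : nat, (1 <= Delta)%N /\
    forall eps : R, (0 < eps)%R ->
      exists (D : finType) (sigma : M -> D -> D),
        (0 < #|D|)%N /\
        (forall v, sigma (mone M) v = v) /\
        (forall k1 k2, In k1 K -> In k2 K ->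
           (ham_dist (sigma (mmul k1 k2)) (fun v => sigma k1 (sigma k2 v)) <= eps)%R) /\
        (forall k1 k2, In k1 K -> In k2 K -> k1 <> k2 ->
           (ham_dist (sigma k1) (sigma k2) >= 1 - eps)%R) /\
        (forall k v, In k K -> (#|[pred w | sigma k w == v]| <= Delta)%N).

From mathcomp Require Import all_boot.
From Stdlib Require Import Reals List.
From Stdlib Require Import Classical ClassicalEpsilon.

(* A finite set K of the limit M lifts to some M_l together with the unit and
   all products of two lifts; going further up the system, the finitely many
   identifications among these lifts that hold in M already hold in M_l.  This
   gives a map r : M -> M_l that is a section of phi_l on K and multiplicative
   on K, and composing a sofic approximation of M_l on r(K) with r
   approximates M on K with the same bound Delta. *)

Definition strongly_sofic_on (M : monoid) (K : list M) : Prop :=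
  exists Delta : nat, (1 <= Delta)%N /\
    forall eps : R, (0 < eps)%R ->
      exists (D : finType) (sigma : M -> D -> D),
        (0 < #|D|)%N /\
        (forall v, sigma (mone M) v = v) /\
        (forall k1 k2, In k1 K -> In k2 K ->
           (ham_dist (sigma (mmul k1 k2)) (fun v => sigma k1 (sigma k2 v)) <= eps)%R) /\
        (forall k1 k2, In k1 K -> In k2 K -> k1 <> k2 ->
           (ham_dist (sigma k1) (sigma k2) >= 1 - eps)%R) /\
        (forall k v, In k K -> (#|[pred w | sigma k w == v]| <= Delta)%N).

Lemma strongly_sofic_on_pullback {M N : monoid} {K : list M} {r : M -> N} :
  r (mone M) = mone N ->
  (forall k1 k2, In k1 K -> In k2 K -> r (mmul k1 k2) = mmul (r k1) (r k2)) ->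
  (forall k1 k2, In k1 K -> In k2 K -> r k1 = r k2 -> k1 = k2) ->
  strongly_sofic_on N (map r K) -> strongly_sofic_on M K.
Proof.
move=> r1 rM r_inj [Delta [Delta_gt0 approx]]; exists Delta; split=> // eps eps_gt0.
have [D [sigma [D_gt0 [sigma1 [sigmaM [sigma_sep sigma_fib]]]]]] := approx eps eps_gt0.
exists D, (fun m => sigma (r m)); do !split=> //.
- by move=> v; rewrite r1 sigma1.
- by move=> k1 k2 K1 K2; rewrite rM //; apply: sigmaM; apply: in_map.
- move=> k1 k2 K1 K2 neq; apply: sigma_sep; try exact: in_map.
  by move=> /r_inj; auto.
- by move=> k v Kk; apply: sigma_fib; apply: in_map.
Qed.

Lemma exists_factor_on (A B C : Type) (c0 : C) (f : A -> B) (g : A -> C)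
    (L : list A) :
  (forall x y, In x L -> In y L -> f x = f y -> g x = g y) ->
  exists r : B -> C, forall x, In x L -> r (f x) = g x.
Proof.
move=> fg.
exists (fun b => epsilon (inhabits c0)
                   (fun c => exists x, [/\ In x L, f x = b & g x = c])).
move=> x Lx.
have : exists c y, [/\ In y L, f y = f x & g y = c] by exists (g x), x.
move=> /(epsilon_spec (inhabits c0)) [y [Ly fyx <-]].
exact: fg.
Qed.

Section InductiveLimit.

Context {I : Type} {le : I -> I -> bool} {Ms : I -> monoid}
  {psi : forall i j, le i j -> Ms i -> Ms j}
  {M : monoid} {phi : forall i, Ms i -> M}.
Hypothesis system : inductive_system psi.
Hypothesis limit : is_inductive_limit psi phi.

Lemma index_le_refl i : le i i.
Proof. by case: system => [[_ [refl _]] _]. Qed.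

Lemma index_le_trans {i j k} : le i j -> le j k -> le i k.
Proof. by case: system => [[_ [_ [trans _]]] _]; apply: trans. Qed.

Lemma index_upper_bound i j : exists k, le i k /\ le j k.
Proof. by case: system => [[_ [_ [_ dir]]] _]. Qed.

Lemma psi_morphism {i j} (h : le i j) : is_monoid_morphism (psi i j h).
Proof. by case: system => _ []. Qed.

Lemma psi_comp {i j k} (hij : le i j) (hjk : le j k) (hik : le i k) x :
  psi j k hjk (psi i j hij x) = psi i k hik x.
Proof. by case: system => _ [_ [_]]; apply. Qed.

Lemma phi_psi i j (h : le i j) x : phi j (psi i j h x) = phi i x.
Proof.
case: limit => _ [eqv _]; apply/eqv; exists j, (index_le_refl j), h.
by case: system => _ [_ [->]].
Qed.

Lemma phi_mul i x y : phi i (mmul x y) = mmul (phi i x) (phi i y).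
Proof.
case: limit => _ [_ mulphi]; case: system => _ [_ [psi_id _]].
by rewrite (mulphi _ _ _ (index_le_refl i) (index_le_refl i)) !psi_id.
Qed.

Lemma phi_one i : phi i (mone _) = mone M.
Proof.
have one_mul m : mmul (phi i (mone _)) m = m.
  case: limit => [surj [_ mulphi]]; have [j [y <-]] := surj m.
  have [k [hik hjk]] := index_upper_bound i j.
  by rewrite (mulphi _ _ _ hik hjk) (psi_morphism hik).1 mmul1x phi_psi.
by rewrite -[LHS]mmulx1 one_mul.
Qed.

Lemma list_lift (K : list M) : exists l (K' : list (Ms l)), K = map (phi l) K'.
Proof.
elim: K => [|m K [l [K' ->]]]; first by case: system => [[[i0] _] _]; exists i0, nil.
case: limit => [surj _]; have [i [x <-]] := surj m.
have [k [hik hlk]] := index_upper_bound i l.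
exists k, (psi i k hik x :: map (psi l k hlk) K'); rewrite /= phi_psi map_map.
by congr (_ :: _); apply: map_ext => a; rewrite phi_psi.
Qed.

Lemma psi_identifies_eventually {i} (P : list (Ms i * Ms i)) :
  exists j (h : le i j), forall p, In p P ->
    phi i p.1 = phi i p.2 -> psi i j h p.1 = psi i j h p.2.
Proof.
elim: P => [|[x y] P [j [hij IH]]]; first by exists i, (index_le_refl i).
case: (classic (phi i x = phi i y)) => [exy|nexy]; last first.
  by exists j, hij => p [<-|Pp] //; apply: IH.
case: limit => _ [eqv _].
have [l [hx [hy psi_xy]]] := proj1 (eqv _ _ x y) exy.
rewrite (bool_irrelevance hy hx) in psi_xy.
have [k [hjk hlk]] := index_upper_bound j l.
have hik := index_le_trans hij hjk.
exists k, hik => p [<-|Pp] /= ep.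
  by rewrite -(psi_comp hx hlk hik x) -(psi_comp hx hlk hik y) psi_xy.
by rewrite -(psi_comp hij hjk hik p.1) -(psi_comp hij hjk hik p.2) IH.
Qed.

Lemma local_section (K : list M) :
  exists l (r : M -> Ms l),
    [/\ r (mone M) = mone (Ms l),
        forall k, In k K -> phi l (r k) = k
      & forall k1 k2, In k1 K -> In k2 K -> r (mmul k1 k2) = mmul (r k1) (r k2)].
Proof.
have [i [K' ->]] := list_lift K.
pose L := mone (Ms i) :: K' ++ map (fun p => mmul p.1 p.2) (list_prod K' K').
have [l [h psi_eq]] := psi_identifies_eventually (list_prod L L).
have [r rE] : exists r : M -> Ms l, forall x, In x L -> r (phi i x) = psi i l h x.
  apply: exists_factor_on (mone _) _ _ _ _ => x y Lx Ly.
  by apply: (psi_eq (x, y)); apply: in_prod.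
have LK' a : In a K' -> In a L by move=> K'a; right; apply: in_or_app; left.
exists l, r; split.
- by rewrite -(phi_one i) rE ?(psi_morphism h).1 //; left.
- by move=> _ /in_map_iff [a [<- K'a]]; rewrite rE ?phi_psi //; apply: LK'.
move=> _ _ /in_map_iff [a [<- K'a]] /in_map_iff [b [<- K'b]].
have Lab : In (mmul a b) L.
  right; apply: in_or_app; right.
  exact: (in_map (fun p => mmul p.1 p.2) _ (a, b) (in_prod _ _ _ _ K'a K'b)).
by rewrite -phi_mul !rE ?(psi_morphism h).2 //; apply: LK'.
Qed.

End InductiveLimit.

Theorem proposition3p11 (I : Type) (le : I -> I -> bool)
    (Ms : I -> monoid) (psi : forall i j, le i j -> Ms i -> Ms j)
    (M : monoid) (phi : forall i, Ms i -> M) :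
  inductive_system psi ->
  @is_inductive_limit I le Ms psi M phi ->
  (forall i, strongly_sofic (Ms i)) ->
  strongly_sofic M.
Proof.
move=> system limit sofic K.
have [l [r [r1 phi_r rM]]] := local_section system limit K.
apply: (strongly_sofic_on_pullback r1 rM _ (sofic l (map r K))).
by move=> k1 k2 K1 K2 e; rewrite -(phi_r k1) // -(phi_r k2) // e.
Qed.
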